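(* Let $F$ be a euclidean field, $B=F[\![X]\!]$, and $f\in B\setminus\{0\}$. Then $$\operatorname{PO}(f)=\begin{cases}\Phi(F^2,0)\cup\Phi(\epsilon(f)F^2,\mathrm{val}(f)) & \text{if } \mathrm{val}(f)\text{ is odd},\\ \Phi(F^2,0) & \text{if } \mathrm{val}(f)\text{ is even and }\epsilon(f)=1,\\ \Phi(F^2,0)\cup\Phi(F,\mathrm{val}(f))\cup\Phi(F,\mathrm{val}(f)+1) & \text{otherwise.}\end{cases}$$ In particular, $\operatorname{PO}(f)=\operatorname{PO}(1)$ if $\mathrm{val}(f)$ is even and $\epsilon(f)=1$, and $\operatorname{PO}(f)=\operatorname{PO}(\epsilon(f)X^{\mathrm{val}(f)})$ otherwise.
   Context: A euclidean field is a formally real field $F$ with $F=F^2\cup(-F^2)$, where $F^2=\{c^2:c\in F\}$; for $c\in F\setminus\{0\}$ its sign is $1$ if $c\in F^2$ and $-1$ if $-c\in F^2$; for $\epsilon\in\{\pm1\}$, $\epsilon F^2=\{\epsilon c^2: c\in F\}$. Let $B=F[\![X]\!]$, and for nonzero $f=\sum_{i\ge n}a_iX^i\in B$ with $a_n\ne0$ let $\mathrm{val}(f)=n$ (the order of $f$) and $\mathrm{an}(f)=a_n$ (its leading coefficient); $\epsilon(f)$ is the sign of $\mathrm{an}(f)$. For a subset $M\subseteq F$ (a quasi-quadratic module of $F$) and an integer $n\ge0$, $$\Phi(M,n)=\{x\in B\setminus\{0\}:\ \mathrm{val}(x)\equiv n \pmod 2,\ \mathrm{val}(x)\ge n,\ \mathrm{an}(x)\in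 M\}\cup\{0\}.$$ For $g\in B$, $\operatorname{PO}(g)=\{\sigma_0+\sigma_1g:\ \sigma_0,\sigma_1\in\sum B^2\}$ is the monogenic quadratic module (preordering) generated by $g$, where $\sum B^2$ is the set of finite sums of squares in $B$. *)

(* Formal power series F[[X]] are represented as coefficient
   sequences nat -> F, with Cauchy product. *)
From mathcomp Require Import all_boot all_order all_algebra.
Set Implicit Arguments. Unset Strict Implicit. Unset Printing Implicit Defensive.
Import Order.TTheory GRing.Theory.
Local Open Scope ring_scope.

Section Defs.
Variable F : fieldType.

Definition formally_real : Prop :=
  forall s : seq F, \sum_(x <- s) x ^+ 2 = 0 -> all (fun x => x == 0) s.

Definition is_square (c : F) : Prop := exists d : F, c = d ^+ 2.

Definition euclidean_field : Prop :=
  formally_real /\ forall c : F, is_square c \/ is_square (- c).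

Definition is_sign (c eps : F) : Prop :=
  (eps = 1 /\ is_square c) \/ (eps = -1 /\ is_square (- c)).

Definition epsF2 (eps : F) (a : F) : Prop := exists c : F, a = eps * c ^+ 2.

Definition pser := nat -> F.

Definition pser_mul (a b : pser) : pser :=
  fun n => \sum_(i < n.+1) a i * b (n - i)%N.

Definition pser_one : pser := fun n => if n == 0%N then 1 else 0.

Definition pser_monomial (eps : F) (v : nat) : pser :=
  fun n => if n == v then eps else 0.

Definition is_val (f : pser) (n : nat) : Prop :=
  f n != 0 /\ forall i, (i < n)%N -> f i = 0.

Definition sos (s : pser) : Prop :=
  exists l : seq pser, forall n, s n = \sum_(h <- l) pser_mul h h n.

Definition PO (g : pser) (x : pser) : Prop :=
  exists s0 s1 : pser, sos s0 /\ sos s1 /\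
    forall n, x n = s0 n + pser_mul s1 g n.

Definition Phi (M : F -> Prop) (n : nat) (x : pser) : Prop :=
  (forall i, x i = 0) \/
  exists m, is_val x m /\ odd m = odd n /\ (n <= m)%N /\ M (x m).

End Defs.

(* The sets Phi(M, n) are compared under sums (leading terms of different
   parity never cancel) and products by f.  Over a euclidean field,
   Sigma B^2 = Phi(F^2, 0), so PO(f) = Phi(F^2, 0) + Phi(F^2, 0) f, and:
   - v odd: Phi(F^2, 0) f = Phi(eps F^2, v), and the parity argument gives
     PO(f) = Phi(F^2, 0) u Phi(eps F^2, v);
   - v even, eps = 1: f is itself a sum of squares, so PO(f) = Phi(F^2, 0);
   - v even, eps = -1: f = -e^2 and 4 y f = ((y-1)e)^2 + (y+1)^2 f, so PO(f)
     contains X^v B = Phi(F, v) u Phi(F, v+1).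
   The second half of the theorem follows because 1 and eps X^v have the same
   order/sign data as f in the respective cases. *)
From HB Require Import structures.
From mathcomp Require Import all_boot all_order all_algebra.
From mathcomp Require Import boolp ring zify.
Set Implicit Arguments. Unset Strict Implicit. Unset Printing Implicit Defensive.
Import GRing.Theory.
Local Open Scope ring_scope.

Section PowerSeriesRing.
Variable F : fieldType.
Implicit Types a b c : pser F.

Lemma pser_ext a b : (forall n, a n = b n) -> a = b.
Proof. exact: funext. Qed.

HB.instance Definition _ := gen_eqMixin (pser F).
HB.instance Definition _ := gen_choiceMixin (pser F).

Definition pser0 : pser F := fun=> 0.
Definition pser_add a b : pser F := fun n => a n + b n.
Definition pser_opp a : pser F := fun n => - a n.

Lemma pser_addA : associative pser_add.
Proof. by move=> a b c; apply: pser_ext => n; rewrite /pser_add addrA. Qed.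
Lemma pser_addC : commutative pser_add.
Proof. by move=> a b; apply: pser_ext => n; rewrite /pser_add addrC. Qed.
Lemma pser_add0 : left_id pser0 pser_add.
Proof. by move=> a; apply: pser_ext => n; rewrite /pser_add add0r. Qed.
Lemma pser_addN : left_inverse pser0 pser_opp pser_add.
Proof. by move=> a; apply: pser_ext => n; rewrite /pser_add addNr. Qed.

HB.instance Definition _ :=
  GRing.isZmodule.Build (pser F) pser_addA pser_addC pser_add0 pser_addN.

(* The coefficients of index <= N of a product only depend on the truncations
   at order N, which are polynomials; this transfers associativity. *)
Definition trunc (N : nat) a : {poly F} := \poly_(i < N.+1) a i.

Lemma coef_trunc N a i : (i <= N)%N -> (trunc N a)`_i = a i.
Proof. by move=> iN; rewrite coef_poly ltnS iN. Qed.

Lemma pser_mul_trunc N a b n : (n <= N)%N ->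
  pser_mul a b n = (trunc N a * trunc N b)`_n.
Proof.
move=> nN; rewrite coefM; apply: eq_bigr => i _; have /ltnSE iln := ltn_ord i.
by rewrite !coef_trunc //; lia.
Qed.

Lemma pser_mulA : associative (@pser_mul F).
Proof.
move=> a b c; apply: pser_ext => n.
transitivity ((trunc n a * (trunc n b * trunc n c))`_n); last first.
  rewrite mulrA coefM; apply: eq_bigr => i _; have /ltnSE iln := ltn_ord i.
  by rewrite -pser_mul_trunc // coef_trunc ?leq_subr.
rewrite coefM; apply: eq_bigr => i _; have /ltnSE iln := ltn_ord i.
by rewrite -pser_mul_trunc ?leq_subr // coef_trunc.
Qed.

Lemma pser_mulC : commutative (@pser_mul F).
Proof.
by move=> a b; apply: pser_ext => n; rewrite !(pser_mul_trunc _ _ (leqnn n)) mulrC.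
Qed.

Lemma pser_mul1 : left_id (pser_one F) (@pser_mul F).
Proof.
move=> a; apply: pser_ext => n; rewrite /pser_mul big_ord_recl /= mul1r subn0.
by rewrite big1 ?addr0 // => i _; rewrite mul0r.
Qed.

Lemma pser_mulDl : left_distributive (@pser_mul F) pser_add.
Proof.
move=> a b c; apply: pser_ext => n; rewrite /pser_mul /pser_add -big_split.
by apply: eq_bigr => i _; rewrite mulrDl.
Qed.

Lemma pser_one_neq0 : pser_one F != 0.
Proof. by apply/eqP => /(congr1 (fun a => a 0%N)) /eqP; rewrite oner_eq0. Qed.

HB.instance Definition _ := GRing.Zmodule_isComNzRing.Build (pser F)
  pser_mulA pser_mulC pser_mul1 pser_mulDl pser_one_neq0.

Lemma pser_addE a b n : (a + b) n = a n + b n. Proof. by []. Qed.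
Lemma pser_oppE a n : (- a) n = - a n. Proof. by []. Qed.
Lemma pser_mulE a b n : (a * b) n = pser_mul a b n. Proof. by []. Qed.

Lemma pser_sumE (I : Type) (r : seq I) (G : I -> pser F) n :
  (\sum_(i <- r) G i) n = \sum_(i <- r) G i n.
Proof. by elim: r => [|i r IH]; rewrite ?big_nil // !big_cons -IH. Qed.

Lemma pser_natmulE a k n : (a *+ k) n = a n *+ k.
Proof. by elim: k => [|k IH]; rewrite // !mulrS -IH. Qed.

End PowerSeriesRing.

Section Valuation.
Variable F : fieldType.
Implicit Types a b : pser F.

Definition vanish_below a (n : nat) : Prop := forall i, (i < n)%N -> a i = 0.

Lemma pser0P a : (forall i, a i = 0) <-> a = 0.
Proof. by split=> [/pser_ext //|-> i]. Qed.

Lemma pser_zero_or_val a : a = 0 \/ exists m, is_val a m.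
Proof.
have [ex_nz|none] := EM (exists i, a i != 0); last first.
  by left; apply/pser0P => i; case: (eqVneq (a i) 0) => // ai; case: none; exists i.
right; exists (ex_minn ex_nz); case: ex_minnP => m am min_m.
split=> // j jm; case: (eqVneq (a j) 0) => // aj; by have := min_m _ aj; rewrite leqNgt jm.
Qed.

Lemma is_val_uniq a m m' : is_val a m -> is_val a m' -> m = m'.
Proof.
move=> [am am0] [am' am'0]; case: (ltngtP m m') => // [lt|lt].
- by move: am; rewrite am'0 ?eqxx.
- by move: am'; rewrite am0 ?eqxx.
Qed.

Lemma vanish_below_le a n m : (m <= n)%N -> vanish_below a n -> vanish_below a m.
Proof. by move=> mn an i im; apply: an; apply: leq_trans mn. Qed.

Lemma vanish_below_mul a b p q :
  vanish_below a p -> vanish_below b q -> vanish_below (a * b) (p + q)%N.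
Proof.
move=> ap bq k kpq; rewrite pser_mulE /pser_mul big1 // => i _.
have [ip|pi] := ltnP i p; first by rewrite ap ?mul0r.
by rewrite bq ?mulr0 //; have /ltnSE := ltn_ord i; lia.
Qed.

Lemma is_val_mul a b p q : is_val a p -> is_val b q ->
  is_val (a * b) (p + q)%N /\ (a * b) (p + q)%N = a p * b q.
Proof.
move=> [ap ap0] [bq bq0].
have lead : (a * b) (p + q)%N = a p * b q.
  have pO : (p < (p + q).+1)%N by rewrite ltnS leq_addr.
  rewrite pser_mulE /pser_mul (bigD1 (Ordinal pO)) //= addKn big1 ?addr0 // => i /eqP ip.
  have /ltnSE := ltn_ord i; case: (ltngtP i p) => [lt|gt|eq] le.
  - by rewrite ap0 ?mul0r.
  - by rewrite bq0 ?mulr0 //; lia.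
  - by case: ip; apply: val_inj.
split=> //; split; first by rewrite lead mulf_neq0.
exact: vanish_below_mul.
Qed.

Lemma is_val_add_high a b p : is_val a p -> vanish_below b p.+1 ->
  is_val (a + b) p /\ (a + b) p = a p.
Proof.
move=> [ap ap0] bp; have lead : (a + b) p = a p by rewrite pser_addE bp ?addr0.
split=> //; split=> [|i ip]; first by rewrite lead.
by rewrite pser_addE ap0 // bp ?addr0 // ltnW.
Qed.

Lemma is_val_natmul a p k : k%:R != 0 :> F -> is_val a p -> is_val (a *+ k) p.
Proof.
move=> k0 [ap ap0]; split=> [|i ip]; rewrite pser_natmulE.
  by rewrite -mulr_natr mulf_neq0.
by rewrite ap0 ?mul0rn.
Qed.

Lemma is_val_monomial (c : F) v : c != 0 -> is_val (pser_monomial c v) v.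
Proof.
move=> c0; split=> [|i iv]; rewrite /pser_monomial ?eqxx //.
by rewrite ifF //; apply/negbTE; rewrite neq_ltn iv.
Qed.

End Valuation.

Section Construction.
Variable F : fieldType.
Implicit Types g q x : pser F.

Section PrefixRecursion.
Variable step : nat -> pser F -> F.

Fixpoint prefix (n : nat) : seq F :=
  if n is k.+1 then rcons (prefix k) (step k (fun i => nth 0 (prefix k) i))
  else [::].

Lemma size_prefix n : size (prefix n) = n.
Proof. by elim: n => //= n IH; rewrite size_rcons IH. Qed.

Lemma nth_prefix n i : (i < n)%N -> nth 0 (prefix n) i = nth 0 (prefix i.+1) i.
Proof.
elim: n => // n IH; rewrite ltnS leq_eqVlt => /orP[/eqP->//|lt_in].
by rewrite /= nth_rcons size_prefix lt_in IH.
Qed.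

End PrefixRecursion.

Lemma pser_rec (step : nat -> pser F -> F) :
  (forall n g1 g2, (forall i, (i < n)%N -> g1 i = g2 i) -> step n g1 = step n g2) ->
  exists g : pser F, forall n, g n = step n g.
Proof.
move=> step_loc; exists (fun n => nth 0 (prefix step n.+1) n) => n.
rewrite /= nth_rcons size_prefix ltnn eqxx; apply: step_loc => i lt_in.
exact: nth_prefix.
Qed.

Lemma sum_ord_vanishing (G : nat -> F) n N : (n <= N)%N ->
  (forall i, (n < i <= N)%N -> G i = 0) ->
  \sum_(i < N.+1) G i = \sum_(i < n.+1) G i.
Proof.
move=> nN G0; rewrite -!(big_mkord xpredT) (big_cat_nat _ (n := n.+1)) //=.
have -> : \sum_(n.+1 <= i < N.+1) G i = 0.
  by rewrite big_nat_cond big1 // => i /andP[/andP[? ?] _]; apply: G0; lia.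
by rewrite addr0.
Qed.

Lemma pser_divides g x v : is_val g v -> vanish_below x v -> exists q, x = q * g.
Proof.
move=> [gv gv0] xv.
pose step n q := (x (v + n)%N - \sum_(i < n) q i * g (v + n - i)%N) / g v.
have [q qE] : exists q, forall n, q n = step n q.
  apply: pser_rec => n g1 g2 eq12; rewrite /step; congr ((_ - _) / _).
  by apply: eq_bigr => i _; rewrite eq12.
exists q; apply: pser_ext => k; rewrite pser_mulE /pser_mul.
have [kv|vk] := ltnP k v.
  by rewrite xv // big1 // => i _; rewrite gv0 ?mulr0 //; lia.
rewrite -(subnKC vk); move: (k - v)%N => n.
have -> : \sum_(i < (v + n).+1) q i * g (v + n - i)%N =
          \sum_(i < n.+1) q i * g (v + n - i)%N.
  by apply: (@sum_ord_vanishing (fun i => q i * g (v + n - i)%N)) => [|i ?];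
    [lia | rewrite gv0 ?mulr0 //; lia].
by rewrite big_ord_recr /= [q n]qE /step addnK -mulrA mulVf // mulr1 addrC subrK.
Qed.

Lemma pser_sqrt q c : 2%:R != 0 :> F -> c != 0 -> q 0%N = c ^+ 2 ->
  exists h, q = h * h.
Proof.
move=> two0 c0 q0.
pose step n h := if n is k.+1 then
  (q n - \sum_(i < k) h i.+1 * h (n - i.+1)%N) / (2%:R * c) else c.
have [h hE] : exists h, forall n, h n = step n h.
  apply: pser_rec => -[//|n] g1 g2 eq12 /=; congr ((_ - _) / _).
  by apply: eq_bigr => i _; rewrite !eq12 //; have := ltn_ord i; lia.
exists h; apply: pser_ext => -[|k]; rewrite pser_mulE /pser_mul.
  by rewrite big_ord1 hE /= q0 expr2.
rewrite big_ord_recl big_ord_recr /= subn0 subnn [h k.+1]hE [h 0%N]hE /=.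
set S := \sum_(i < k) _; set u := q k.+1.
by field; rewrite c0 two0.
Qed.

End Construction.

Section PhiSets.
Variable F : fieldType.
Implicit Types (M N : F -> Prop) (a b f x : pser F).

Lemma Phi0 M n : Phi M n 0.
Proof. by left. Qed.

Lemma Phi_vanish M n x : Phi M n x -> vanish_below x n.
Proof.
case=> [x0 i _ //|[m [[_ xm0] [_ [nm _]]]] i lt_in].
by apply: xm0; apply: leq_trans nm.
Qed.

Lemma Phi_weaken M N m n x : (forall c, M c -> N c) -> (n <= m)%N -> odd n = odd m ->
  Phi M m x -> Phi N n x.
Proof.
move=> MN nm nm_odd [x0|[k [xk [km [mk Mk]]]]]; [by left | right].
by exists k; do !split => //; [rewrite km | apply: leq_trans mk | apply: MN].
Qed.

(* Leading terms of different parity cannot cancel. *)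
Lemma Phi_add_parity M N p q a b : odd p != odd q -> Phi M p a -> Phi N q b ->
  Phi M p (a + b) \/ Phi N q (a + b).
Proof.
move=> pq [/pser0P->|[m [am [mp [pm Ma]]]]]; first by rewrite add0r; right.
case=> [/pser0P->|[k [bk [kq [qk Nb]]]]]; first by rewrite addr0; left; right; exists m.
have [mk|km|mk] := ltngtP m k.
- have [abm abmE] := is_val_add_high am (vanish_below_le mk bk.2).
  by left; right; exists m; rewrite abmE.
- have [bak bakE] := is_val_add_high bk (vanish_below_le km am.2).
  by right; right; exists k; rewrite addrC bakE.
- by move: pq; rewrite -mp -kq mk eqxx.
Qed.

Lemma Phi_true_cover n x : vanish_below x n ->
  Phi (fun=> True) n x \/ Phi (fun=> True) n.+1 x.
Proof.
move=> xn; have [->|[m xm]] := pser_zero_or_val x; first by left; left.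
have nm : (n <= m)%N by rewrite leqNgt; apply/negP => /xn; apply/eqP; exact: xm.1.
have [m_odd|m_odd] := boolP (odd m == odd n).
  by left; right; exists m; do !split => //; apply/eqP.
right; right; exists m; do !split => //=.
  by move: m_odd; case: (odd m); case: (odd n).
by rewrite ltn_neqAle nm andbT; apply: contraNneq m_odd => ->.
Qed.

Lemma Phi_add_vanishing M p n a b : Phi M p a -> vanish_below b n ->
  Phi M p (a + b) \/ Phi (fun=> True) n (a + b) \/ Phi (fun=> True) n.+1 (a + b).
Proof.
move=> Ma bn; have [->|[m abm]] := pser_zero_or_val (a + b); first by left; left.
have [nm|mn] := leqP n m.
  right; apply: Phi_true_cover => i lt_in; apply: abm.2; exact: leq_trans nm.
have agree i : (i < n)%N -> (a + b) i = a i by move=> lt_in; rewrite pser_addE bn ?addr0.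
have am : is_val a m.
  by split=> [|i im]; rewrite -agree ?abm.1 ?abm.2 //; apply: ltn_trans mn.
case: Ma => [a0|[k [ak Ma]]]; first by move: am.1; rewrite a0 eqxx.
by left; right; exists m; rewrite agree //; move: Ma; rewrite (is_val_uniq ak am).
Qed.

Lemma Phi_mul_val a f v eps d : is_val f v -> f v = eps * d ^+ 2 ->
  Phi (@is_square F) 0 a -> Phi (epsF2 eps) v (a * f).
Proof.
move=> fv fvE [/pser0P->|[m [am [m_even [_ [c amE]]]]]]; first by rewrite mul0r; left.
have [afv afvE] := is_val_mul am fv; right; exists (m + v)%N.
do !split => //; first by rewrite oddD m_even.
  exact: leq_addl.
by exists (c * d); rewrite afvE amE fvE; ring.
Qed.

Lemma Phi_div_val x f v eps d : is_val f v -> f v = eps * d ^+ 2 ->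
  Phi (epsF2 eps) v x -> exists2 q, Phi (@is_square F) 0 q & x = q * f.
Proof.
move=> fv fvE [/pser0P->|[m [xm [m_odd [vm [c xmE]]]]]].
  by exists 0; [left | rewrite mul0r].
have [q xE] := pser_divides fv (vanish_below_le vm xm.2).
exists q => //; have [->|[r qr]] := pser_zero_or_val q.
  by left.
have [qfv qfvE] := is_val_mul qr fv; rewrite -xE in qfv qfvE.
have rvm := is_val_uniq qfv xm; rewrite -rvm in xmE m_odd.
have ed0 : eps * d ^+ 2 != 0 by rewrite -fvE; exact: fv.1.
have d0 : d != 0 by apply: contraNneq ed0 => ->; rewrite expr0n mulr0.
right; exists r; do !split => //.
  by move: m_odd; rewrite oddD; case: (odd r); case: (odd v).
by exists (c / d); apply: (mulIf ed0); rewrite -fvE -qfvE xmE fvE; field.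
Qed.

Lemma sign_decomp (c eps : F) : c != 0 -> is_sign c eps ->
  (eps = 1 \/ eps = -1) /\ exists2 d, d != 0 & c = eps * d ^+ 2.
Proof.
move=> c0 [[-> [d cE]]|[-> [d cE]]]; split; [by left| |by right|].
  by exists d; rewrite ?mul1r //; apply: contraNneq c0 => d0; rewrite cE d0 expr0n.
exists d; last by rewrite mulN1r -cE opprK.
by apply: contraNneq c0 => d0; rewrite -[c]opprK cE d0 expr0n oppr0.
Qed.

Lemma is_sign_unit (eps : F) : eps = 1 \/ eps = -1 -> is_sign eps eps.
Proof. by case=> ->; [left | right]; split=> //; exists 1; rewrite ?opprK expr1n. Qed.

End PhiSets.

Section EuclideanField.
Variable F : fieldType.
Hypothesis HF : euclidean_field F.
Implicit Types (a g x : pser F).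

Lemma sum3_sq_eq0 (c d e : F) : c ^+ 2 + d ^+ 2 + e ^+ 2 = 0 -> c = 0.
Proof.
have [real _] := HF; move=> sum0; have := real [:: c; d; e].
by rewrite !big_cons big_nil addr0 addrA => /(_ sum0) /and3P[/eqP].
Qed.

Lemma natrS_neq0 k : k.+1%:R != 0 :> F.
Proof.
have [real _] := HF; apply/negP => /eqP k0.
have sum_ones n : \sum_(x <- nseq n (1 : F)) x ^+ 2 = n%:R.
  by elim: n => [|n IH]; rewrite ?big_nil // big_cons IH expr1n mulrS.
by have := real (nseq k.+1 1); rewrite sum_ones k0 => /(_ erefl) /=; rewrite oner_eq0.
Qed.

Lemma square_add (c d : F) : is_square c -> is_square d -> c != 0 ->
  c + d != 0 /\ is_square (c + d).
Proof.
move=> [s ->] [t ->] s0; have s_neq0 : s != 0 by apply: contraNneq s0 => ->; rewrite expr0n.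
split.
  by apply: contra_neq s_neq0 => sum0; apply: (@sum3_sq_eq0 s t 0); rewrite sum0 expr0n addr0.
have [_ /(_ (s ^+ 2 + t ^+ 2)) [//|[e eE]]] := HF.
by case/eqP: s_neq0; apply: (@sum3_sq_eq0 s t e); rewrite -eE addrN.
Qed.

(* Phi(F^2, 0) is closed under addition: equal leading orders cannot cancel. *)
Lemma Phi_square_add a b : Phi (@is_square F) 0 a -> Phi (@is_square F) 0 b ->
  Phi (@is_square F) 0 (a + b).
Proof.
move=> [/pser0P->|[p [ap [p_even [_ sqa]]]]]; first by rewrite add0r.
case=> [/pser0P->|[q [bq [q_even [_ sqb]]]]]; first by rewrite addr0; right; exists p.
have [pq|qp|pq] := ltngtP p q; last subst q.
- have [abp abpE] := is_val_add_high ap (vanish_below_le pq bq.2).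
  by right; exists p; rewrite abpE.
- have [bap bapE] := is_val_add_high bq (vanish_below_le qp ap.2).
  by right; exists q; rewrite addrC bapE.
- have [sum0 sqsum] := square_add sqa sqb ap.1.
  right; exists p; do !split => //.
  by move=> i ip; rewrite pser_addE ap.2 // bq.2 // addr0.
Qed.

Lemma Phi_square_mul h : Phi (@is_square F) 0 (h * h).
Proof.
have [->|[m hm]] := pser_zero_or_val h; first by rewrite mul0r; left.
have [hhm hhmE] := is_val_mul hm hm; right; exists (m + m)%N.
by do !split => //; [rewrite addnn odd_double | exists (h m); rewrite hhmE expr2].
Qed.

(* Conversely every element of Phi(F^2, 0) is a single square: divide by the
   square of X^(m/2) and extract a square root. *)
Lemma Phi_square_sqrt a : Phi (@is_square F) 0 a -> exists h, a = h * h.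
Proof.
move=> [/pser0P->|[m [am [m_even [_ [d amE]]]]]]; first by exists 0; rewrite mul0r.
have mE : m = (m./2 + m./2)%N by rewrite addnn -[in LHS](odd_double_half m) m_even.
set k := m./2 in mE; pose xk : pser F := pser_monomial 1 k.
have xkk : is_val xk k := is_val_monomial k (oner_neq0 F).
have [xk2 xk2E] := is_val_mul xkk xkk.
have [q aE] := pser_divides xk2 (vanish_below_le (eq_leq (esym mE)) am.2).
have [q0|[r qr]] := pser_zero_or_val q.
  by move: am.1; rewrite aE q0 mul0r eqxx.
have [aval avalE] := is_val_mul qr xk2; rewrite -aE in aval avalE.
have r0 : r = 0%N by move: (is_val_uniq aval am); rewrite mE; lia.
rewrite xk2E r0 add0n -mE amE /xk /pser_monomial eqxx !mulr1 in avalE.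
have d0 : d != 0 by apply: contraNneq am.1 => d0; rewrite amE d0 expr0n.
have [h qE] := pser_sqrt (natrS_neq0 1) d0 (esym avalE).
by exists (h * xk); rewrite aE qE; ring.
Qed.

Lemma sos_Phi s : sos s <-> Phi (@is_square F) 0 s.
Proof.
split=> [[l sE]|/Phi_square_sqrt[h ->]]; last first.
  by exists [:: h] => n; rewrite big_seq1.
have -> : s = \sum_(h <- l) h * h by apply: pser_ext => n; rewrite sE pser_sumE.
elim: l {sE} => [|h l IH]; first by rewrite big_nil; left.
by rewrite big_cons; apply: Phi_square_add => //; apply: Phi_square_mul.
Qed.

Lemma PO_PhiE g x : PO g x <-> exists s0 s1, [/\ Phi (@is_square F) 0 s0,
  Phi (@is_square F) 0 s1 & x = s0 + s1 * g].
Proof.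
split=> [[s0 [s1 [/sos_Phi s0P [/sos_Phi s1P xE]]]]|[s0 [s1 [/sos_Phi s0P /sos_Phi s1P ->]]]].
  by exists s0, s1; split=> //; apply: pser_ext.
by exists s0, s1.
Qed.

Lemma Phi_square_PO g x : Phi (@is_square F) 0 x -> PO g x.
Proof.
by move=> x_sq; apply/PO_PhiE; exists x, 0; rewrite mul0r addr0; split => //; apply: Phi0.
Qed.

(* If -g is a square, every multiple of 4 g lies in PO(g):
   4 y g = ((y - 1) e)^2 + (y + 1)^2 g  when g = - e^2. *)
Lemma PO_neg_square (e y : pser F) : PO (- (e * e)) (y * - (e * e) *+ 4).
Proof.
apply/PO_PhiE; exists ((y - 1) * e * ((y - 1) * e)), ((y + 1) * (y + 1)).
by split; [apply: Phi_square_mul | apply: Phi_square_mul | ring].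
Qed.

End EuclideanField.

Section Characterization.
Variable F : fieldType.

Definition PO_shape (v : nat) (eps : F) (x : pser F) : Prop :=
  if odd v then Phi (@is_square F) 0 x \/ Phi (epsF2 eps) v x
  else if eps == 1 then Phi (@is_square F) 0 x
  else Phi (@is_square F) 0 x \/ Phi (fun _ => True) v x
       \/ Phi (fun _ => True) v.+1 x.

Hypothesis HF : euclidean_field F.
Variables (f : pser F) (v : nat) (eps : F).
Hypotheses (fv : is_val f v) (feps : is_sign (f v) eps).
Implicit Types x : pser F.

(* odd order: squares and squares times f have leading terms of different parity *)
Lemma PO_odd x : odd v ->
  PO f x <-> Phi (@is_square F) 0 x \/ Phi (epsF2 eps) v x.
Proof.
move=> v_odd; have [_ [d _ fvE]] := sign_decomp fv.1 feps; split.
  case/(PO_PhiE HF)=> [s0 [s1 [s0P s1P ->]]].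
  by apply: Phi_add_parity s0P (Phi_mul_val fv fvE s1P); rewrite v_odd.
case=> [/(Phi_square_PO HF) //|/(Phi_div_val fv fvE) [q qP ->]].
by apply/(PO_PhiE HF); exists 0, q; rewrite add0r; split=> //; apply: Phi0.
Qed.

(* even order, positive sign: f itself is a sum of squares *)
Lemma PO_even_pos x : ~~ odd v -> eps = 1 -> PO f x <-> Phi (@is_square F) 0 x.
Proof.
move=> v_even eps1; have [_ [d _ fvE]] := sign_decomp fv.1 feps.
split; last exact: Phi_square_PO.
case/(PO_PhiE HF)=> [s0 [s1 [s0P s1P ->]]]; apply: Phi_square_add => //.
apply: (Phi_weaken _ _ _ (Phi_mul_val fv fvE s1P)) => //; last by rewrite (negbTE v_even).
by move=> c [e ->]; rewrite eps1 mul1r; exists e.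
Qed.

(* even order, negative sign: -f is a square, so PO(f) contains all of X^v B *)
Lemma PO_even_neg x : ~~ odd v -> eps != 1 ->
  PO f x <-> Phi (@is_square F) 0 x \/ Phi (fun _ => True) v x
             \/ Phi (fun _ => True) v.+1 x.
Proof.
move=> v_even eps_n1; have [[eps1|epsN1] [d _ fvE]] := sign_decomp fv.1 feps.
  by rewrite eps1 eqxx in eps_n1.
split.
  case/(PO_PhiE HF)=> [s0 [s1 [s0P s1P ->]]]; apply: Phi_add_vanishing s0P _.
  exact: (@vanish_below_mul _ s1 f 0) fv.2.
have [e fE] : exists e, f = - (e * e).
  have [e eE] : exists e, - f = e * e.
    apply: (Phi_square_sqrt HF); right; exists v; do !split.
    - by rewrite pser_oppE oppr_eq0 fv.1.
    - by move=> i iv; rewrite pser_oppE fv.2 ?oppr0.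
    - by rewrite (negbTE v_even).
    - by exists d; rewrite pser_oppE fvE epsN1; ring.
  by exists e; rewrite -eE opprK.
case=> [/(Phi_square_PO HF) //|x_high].
have xv : vanish_below x v.
  case: x_high => /Phi_vanish //; exact: vanish_below_le (leqnSn v).
have [y ->] := pser_divides (is_val_natmul (natrS_neq0 HF 3) fv) xv.
by rewrite mulrnAr fE; apply: PO_neg_square.
Qed.

Lemma PO_characterization x : PO f x <-> PO_shape v eps x.
Proof.
rewrite /PO_shape; case: ifP => [v_odd|/negbT v_even]; first exact: PO_odd.
by case: eqP => [eps1|/eqP eps_n1]; [apply: PO_even_pos | apply: PO_even_neg].
Qed.

End Characterization.

Theorem mainTheorem15 (F : fieldType) (HF : euclidean_field F)
  (f : pser F) (v : nat) (eps : F)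
  (Hv : is_val f v) (Heps : is_sign (f v) eps) :
  (forall x : pser F,
     PO f x <->
     (if odd v then Phi (@is_square F) 0 x \/ Phi (epsF2 eps) v x
      else if eps == 1 then Phi (@is_square F) 0 x
      else Phi (@is_square F) 0 x \/ Phi (fun _ => True) v x
           \/ Phi (fun _ => True) v.+1 x))
  /\
  (forall x : pser F,
     PO f x <->
     (if ~~ odd v && (eps == 1) then PO (pser_one F) x
      else PO (pser_monomial eps v) x)).
Proof.
have PO_f x : PO f x <-> PO_shape v eps x := PO_characterization HF Hv Heps x.
split=> // x; rewrite PO_f.
have [eps_pm _] := sign_decomp Hv.1 Heps.
have eps_sign : is_sign eps eps := is_sign_unit eps_pm.
case: ifP => [/andP[v_even /eqP eps1]|_].
  (* PO(1) has the shape of an even order with positive sign *)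
  have one_val : is_val (pser_one F) 0 := is_val_monomial 0 (oner_neq0 F).
  rewrite (PO_characterization HF one_val (is_sign_unit (or_introl erefl))).
  by rewrite /PO_shape /= (negbTE v_even) eps1 eqxx.
(* eps X^v has the same order and sign as f *)
have eps0 : eps != 0 by case: eps_pm => ->; rewrite ?oppr_eq0 oner_eq0.
have mono_sign : is_sign (pser_monomial eps v v) eps by rewrite /pser_monomial eqxx.
by rewrite (PO_characterization HF (is_val_monomial v eps0) mono_sign).
Qed.
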